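(* Let $L$ be a relational language and $<\,\notin L$ a binary relation symbol. Let $\mathcal{S} = (S,L^S,<^S)$ be an enumerated $L$-structure such that $(S,L^S)$ is a Fraïssé limit which has finite big Ramsey degrees, whose age has the strong amalgamation property, and which has natural 1-point extensions. Then for every $\mathcal{A}\in\mathrm{Fin}(\mathcal{S})$ there is $n\in\mathbb{N}$ such that for every $k\in\mathbb{N}$ and every family of colorings $\gamma_\mathcal{B} : \binom{\mathcal{B}}{\mathcal{A}}\to k$ indexed by $\mathcal{B}\in\mathrm{Fin}(\mathcal{S})$, there are a substructure $\mathcal{S}'$ of $\mathcal{S}$ isomorphic to $\mathcal{S}$ and a choice function $c$ assigning to each $\mathcal{E}\in\binom{\mathcal{S}'}{\mathcal{A}}$ some $c(\mathcal{E})\in\mathrm{Fin}(\mathcal{S})$ with $\mathcal{E}\le c(\mathcal{E})$, such that $$\Big|\Big\{\gamma_{c(\mathcal{E})}(\mathcal{E}) : \mathcal{E}\in\binom{\mathcal{S}'}{\mathcal{A}}\Big\}\Big|\le n.$$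
   Context: For $L$-structures, an embedding is an injective map preserving and reflecting all relations; $\mathrm{Emb}(\mathcal{A},\mathcal{B})$ is the set of embeddings. $\mathcal{A}\le\mathcal{B}$ means $\mathcal{A}$ is an induced substructure of $\mathcal{B}$; $\mathcal{S}[A]$ is the substructure induced on $A$. $\mathrm{Fin}(\mathcal{S})=\{\mathcal{S}[A]:\varnothing\ne A\subseteq S, A\text{ finite}\}$, and $\binom{\mathcal{B}}{\mathcal{A}}=\{\mathcal{E}:\mathcal{E}\cong\mathcal{A},\ \mathcal{E}\le\mathcal{B}\}$ (all as $(L\cup\{<\})$-structures). An enumerated $L$-structure is an $(L\cup\{<\})$-structure $(S,L^S,<^S)$ with $(S,<^S)$ of order type $\omega$. A Fraïssé limit is a countably infinite ultrahomogeneous structure; its age (finite structures embeddable into it) has strong amalgamation if any two embeddings $f:\mathcal{A}\hookrightarrow\mathcal{B}$, $g:\mathcal{A}\hookrightarrow\mathcal{C}$ in the age can be completed by embeddings $f':\mathcal{B}\hookrightarrow\mathcal{D}$, $g':\mathcal{C}\hookrightarrow\mathcal{D}$ into some $\mathcal{D}$ in the age with $f'\circ f=g'\circ g$ and $f'(B)\cap g'(C)=f'(f(A))$. $\mathcal{F}$ has finite big Ramsey degrees if for every finite $\mathcal{A}$ in its age there is $n$ such that every coloring $\chi:\mathrm{Emb}(\mathcal{A},\mathcal{F})\to k$ ($k\in\mathbb{N}$) admits $w\in\mathrm{Emb}(\mathcal{F},\mathcal{F})$ with $|\chi(w\circ\mathrm{Emb}(\mathcal{A},\mathcal{F}))|\le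 n$. $\mathcal{F}$ has natural 1-point extensions if there is a functor $J:\mathrm{Fin}(\mathcal{F})\to\mathrm{Fin}(\mathcal{F})$ (morphisms: embeddings) such that for each $\mathcal{A}=(A,L^A)$ with $J(\mathcal{A})=(A',L^{A'})$, $\mathcal{A}\le J(\mathcal{A})$ and $|A'\setminus A|=1$, and for each embedding $f:\mathcal{A}\hookrightarrow\mathcal{B}$, $J(f)$ extends $f$ and maps the point of $A'\setminus A$ to the point of $B'\setminus B$. *)

From mathcomp Require Import all_boot.
From mathcomp Require Import finmap.
Set Implicit Arguments. Unset Strict Implicit. Unset Printing Implicit Defensive.
Local Open Scope fset_scope.

Record lang := Lang { sym : Type; ar : sym -> nat }.

Definition interp (L : lang) (T : Type) :=
  forall s : sym L, ('I_(ar s) -> T) -> Prop.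

Record structure (L : lang) := Structure {
  carrier :> Type;
  rel : interp L carrier }.
Arguments rel {L} s _ _ : rename.

Definition finite_ne (T : Type) :=
  (exists x : T, True) /\
  exists (m : nat) (e : 'I_m -> T), forall x, exists i, e i = x.

Definition is_emb L (A B : structure L) (f : A -> B) :=
  injective f /\
  forall s (t : 'I_(ar s) -> A), rel A s t <-> rel B s (f \o t).

Definition is_emb_into L (A : structure L) (S : Type) (R : interp L S)
    (f : A -> S) :=
  injective f /\ forall s (t : 'I_(ar s) -> A), rel A s t <-> R s (f \o t).

Definition is_self_emb L (S : Type) (R : interp L S) (w : S -> S) :=
  injective w /\ forall s (t : 'I_(ar s) -> S), R s t <-> R s (w \o t).

Definition in_age L (S : Type) (R : interp L S) (A : structure L) :=
  finite_ne A /\ exists f : A -> S, is_emb_into R f.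

(** f (a function S -> S, considered on A) is an L-embedding S[A] -> S[B]
    of induced substructures on finite sets A, B. *)
Definition sub_emb L (S : choiceType) (R : interp L S) (A B : {fset S})
    (f : S -> S) :=
  {in A &, injective f} /\ {in A, forall x, f x \in B} /\
  forall s (t : 'I_(ar s) -> S), (forall i, t i \in A) ->
    (R s t <-> R s (f \o t)).

Definition sub_iso L (S : choiceType) (R : interp L S) (A B : {fset S})
    (f : S -> S) :=
  sub_emb R A B f /\ {in B, forall y, exists2 x, x \in A & f x = y}.

Definition sub_iso_lt L (S : choiceType) (R : interp L S) (lt : S -> S -> Prop)
    (A B : {fset S}) (f : S -> S) :=
  sub_iso R A B f /\ {in A &, forall x y, lt x y <-> lt (f x) (f y)}.

Definition order_type_omega (S : Type) (lt : S -> S -> Prop) :=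
  exists e : nat -> S, bijective e /\ forall m n, lt (e m) (e n) <-> (m < n)%N.

Definition ultrahomogeneous L (S : choiceType) (R : interp L S) :=
  forall (A B : {fset S}) (f : S -> S), sub_iso R A B f ->
    exists g : S -> S, bijective g /\
      (forall s (t : 'I_(ar s) -> S), R s t <-> R s (g \o t)) /\
      {in A, forall x, g x = f x}.

Definition fraisse_limit L (S : choiceType) (R : interp L S) :=
  (exists e : nat -> S, bijective e) /\ ultrahomogeneous R.

Definition strong_amalgamation L (S : Type) (R : interp L S) :=
  forall (A B C : structure L) (f : A -> B) (g : A -> C),
    in_age R A -> in_age R B -> in_age R C -> is_emb f -> is_emb g ->
    exists (D : structure L) (f' : B -> D) (g' : C -> D),
      [/\ in_age R D, is_emb f', is_emb g',
          (forall a, f' (f a) = g' (g a)) &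
          (forall b c, f' b = g' c -> exists a, f' (f a) = f' b)].

Definition finite_big_ramsey_degrees L (S : Type) (R : interp L S) :=
  forall A : structure L, in_age R A ->
    exists n : nat, forall (k : nat) (chi : (A -> S) -> 'I_k),
      exists w : S -> S, is_self_emb R w /\
        exists cols : seq 'I_k, (size cols <= n)%N /\
          forall e : A -> S, is_emb_into R e -> chi (w \o e) \in cols.

(** Natural 1-point extensions: a functor J on Fin(S,R) (objects: induced
    substructures on finite nonempty subsets; morphisms: L-embeddings,
    represented by functions S -> S considered on the domain). *)
Definition natural_one_point_ext L (S : choiceType) (R : interp L S) :=
  exists (J : {fset S} -> {fset S})
         (Jm : {fset S} -> {fset S} -> (S -> S) -> (S -> S)),
  [/\ (forall A, A != fset0 -> A `<=` J A /\ #|` J A `\` A| = 1),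
      (forall A B f, A != fset0 -> B != fset0 -> sub_emb R A B f ->
         [/\ sub_emb R (J A) (J B) (Jm A B f),
             {in A, forall x, Jm A B f x = f x} &
             {in J A `\` A, forall x, Jm A B f x \in J B `\` B}]),
      (forall A B f f', A != fset0 -> B != fset0 -> sub_emb R A B f ->
         {in A, f =1 f'} -> {in J A, Jm A B f =1 Jm A B f'}),
      (forall A, A != fset0 -> {in J A, Jm A A id =1 id}) &
      (forall A B C f g, A != fset0 -> B != fset0 -> C != fset0 ->
         sub_emb R A B f -> sub_emb R B C g ->
         {in J A, forall x, Jm A C (g \o f) x = Jm B C g (Jm A B f x)})].

Definition iso_to_sub L (S : Type) (R : interp L S) (lt : S -> S -> Prop)
    (X : S -> Prop) :=
  exists h : S -> S,
    [/\ injective h, (forall x, X (h x)), (forall y, X y -> exists x, h x = y),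
        (forall s (t : 'I_(ar s) -> S), R s t <-> R s (h \o t)) &
        (forall x y, lt x y <-> lt (h x) (h y))].

Definition in_binom L (S : choiceType) (R : interp L S) (lt : S -> S -> Prop)
    (X : S -> Prop) (A E : {fset S}) :=
  (forall x, x \in E -> X x) /\ exists f : S -> S, sub_iso_lt R lt A E f.

(* Colour an L-copy f of A in S by gamma at its image (taken as both the
   substructure and the copy); finite big Ramsey degrees give an L-self-embedding
   w on whose copies at most n colours occur, so c(E) := E works as soon as the
   range of w contains a copy of S as an (L u {<})-structure.  Such a copy is the
   range of w o g, where g is built along the enumeration: having placed the
   images of the first n points, ultrahomogeneity and strong amalgamation give a
   realisation of the type of the next point over them outside any prescribed
   finite set, hence one whose w-image comes later in the order than all earlier
   w-images. *)

From mathcomp Require Import all_boot.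
From mathcomp Require Import finmap.
From Stdlib Require Import Classical ClassicalEpsilon FunctionalExtensionality.
Unset Printing Implicit Defensive.
Local Open Scope fset_scope.

Lemma finite_preimage {T U : choiceType} {w : T -> U} (B : {fset U}) :
  injective w -> exists K : {fset T}, forall y, w y \in B -> y \in K.
Proof.
move=> winj.
have pre (b : B) : exists z : option T, forall y, w y = val b -> z = Some y.
  case: (classic (exists y, w y = val b)) => [[y wy]|ny].
  - by exists (Some y) => y' wy'; congr Some; apply: winj; rewrite wy wy'.
  - by exists None => y wy; case: ny; exists y.
have [fz fzP] := fin_all_exists pre.
exists [fset y in pmap fz (enum {: B})] => y wyB.
rewrite in_fset mem_pmap -(fzP [` wyB] y) //.
by apply: map_f; rewrite mem_enum.
Qed.

Section InducedSubstructures.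
Context {L : lang} {S : choiceType} {R : interp L S}.

Definition substr (B : {fset S}) : structure L :=
  @Structure L B (fun s t => R s (fun i => val (t i))).

Lemma in_age_substr {B : {fset S}} : B != fset0 -> in_age R (substr B).
Proof.
move=> /fset0Pn [x xB]; split; last by exists val; split; [exact: val_inj|].
split; first by exists [` xB].
by exists #|{: B}|, enum_val => y; exists (enum_rank y); exact: enum_rankK.
Qed.

Lemma is_emb_fincl {B C : {fset S}} (BC : B `<=` C) :
  @is_emb L (substr B) (substr C) (fincl BC).
Proof. by split; [exact: fincl_inj|]. Qed.

Definition preserves_on (D : {fset S}) (f : S -> S) :=
  forall s (t : 'I_(ar s) -> S), (forall i, t i \in D) -> R s t <-> R s (f \o t).

Lemma preserves_on_sub (D D' : {fset S}) f :
  {subset D' <= D} -> preserves_on D f -> preserves_on D' f.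
Proof. by move=> D'D fD s t tD'; apply: fD => i; apply: D'D. Qed.

Lemma preserves_on_eq {D : {fset S}} {f f'} :
  {in D, f =1 f'} -> preserves_on D f -> preserves_on D f'.
Proof.
move=> ff' fD s t tD; apply: iff_trans (fD s t tD) _.
by have -> : f \o t = f' \o t by apply: functional_extensionality => i /=; rewrite ff'.
Qed.

Lemma preserves_on_comp {D : {fset S}} {f g} :
  (forall s t, R s t <-> R s (g \o t)) -> preserves_on D f -> preserves_on D (g \o f).
Proof. by move=> gR fD s t tD; apply: iff_trans (fD s t tD) (gR s _). Qed.

Lemma sub_iso_imfset {D : {fset S}} {f} :
  {in D &, injective f} -> preserves_on D f -> sub_iso R D [fset f x | x in D] f.
Proof.
move=> finj fD; split; first by split=> //; split=> // x xD; apply/imfsetP; exists x.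
by move=> y /imfsetP [x xD ->]; exists x.
Qed.

Lemma automorphism_inv {g g' : S -> S} : cancel g' g ->
  (forall s t, R s t <-> R s (g \o t)) -> forall s t, R s t <-> R s (g' \o t).
Proof.
move=> g'K gR s t; apply: iff_sym; apply: iff_trans (gR s _) _.
by have -> : g \o (g' \o t) = t by apply: functional_extensionality => i /=.
Qed.

Definition extend (f : S -> S) (a y x : S) := if x == a then y else f x.

Lemma extend_notin (f : S -> S) (D : {fset S}) a y x :
  a \notin D -> x \in D -> extend f a y x = f x.
Proof. by move=> aD xD; rewrite /extend; case: eqP => // xa; rewrite -xa xD in aD. Qed.

Hypotheses (sap : strong_amalgamation R) (uh : ultrahomogeneous R).

Lemma amalgam_fresh_point {D : {fset S}} (K : {fset S}) {a} :
  D != fset0 -> a \notin D ->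
  exists (p : S) (psi : S -> S),
    [/\ {in D `|` K &, injective psi}, preserves_on (D `|` K) psi,
        preserves_on (a |` D) (extend psi a p) &
        {in D `|` K, forall x, psi x != p}].
Proof.
move=> D0 aD.
have DaD : D `<=` a |` D by apply/fsubsetP => x xD; rewrite in_fsetU xD orbT.
have DDK : D `<=` D `|` K by apply/fsubsetP => x xD; rewrite in_fsetU xD.
have DK0 : D `|` K != fset0.
  by case/fset0Pn: D0 => x xD; apply/fset0Pn; exists x; rewrite in_fsetU xD.
have aD0 : a |` D != fset0 by apply/fset0Pn; exists a; exact: fsetU11.
have [SD [f' [g' [[_ [io [ioinj ioR]]] embf embg comm strong]]]] :=
  sap (substr D) (substr (a |` D)) (substr (D `|` K)) (fincl DaD) (fincl DDK)
    (in_age_substr D0) (in_age_substr aD0) (in_age_substr DK0)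
    (is_emb_fincl DaD) (is_emb_fincl DDK).
pose toS (B : {fset S}) (h : substr B -> SD) x :=
  if insub x is Some u then io (h u) else x.
have toSE B h x (xB : x \in B) : toS B h x = io (h [` xB]) by rewrite /toS insubT.
have toSR B h : @is_emb L (substr B) SD h -> preserves_on B (toS B h).
  move=> [_ hR] s t tB; pose u i : substr B := [` tB i].
  have -> : toS B h \o t = io \o (h \o u).
    by apply: functional_extensionality => i /=; rewrite (toSE _ _ _ (tB i)).
  exact: iff_trans (hR s u) (ioR s (h \o u)).
exists (toS _ f' a), (toS _ g'); split.
- move=> x y xDK yDK; rewrite !toSE => /ioinj /embg.1 /(congr1 val) //.
- exact: toSR.
- apply: preserves_on_eq (toSR _ _ embf) => x xaD.
  rewrite /extend; case: eqP => [->|xa]; first by [].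
  have xD : x \in D by move: xaD; case/fset1UP.
  have xDK : x \in D `|` K by rewrite in_fsetU xD.
  rewrite (toSE _ _ _ xaD) (toSE _ _ _ xDK).
  have -> : [` xaD] = fincl DaD [` xD] by apply: val_inj.
  have -> : [` xDK] = fincl DDK [` xD] by apply: val_inj.
  by rewrite comm.
- move=> x xDK; rewrite (toSE _ _ _ xDK) (toSE _ _ _ (fsetU11 a D)).
  apply/eqP => /ioinj /esym /strong [d].
  by move=> /embf.1 /(congr1 val) /= da; move: aD; rewrite -da (fsvalP d).
Qed.

Lemma fresh_point {D : {fset S}} (K : {fset S}) {a} :
  D != fset0 -> a \notin D ->
  exists2 y, y \notin K & preserves_on (a |` D) (extend id a y).
Proof.
move=> D0 aD.
have [p [psi [psiI psiR psiaR psip]]] := amalgam_fresh_point K D0 aD.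
have [tau [[taui tauK tauiK] [tauR tauE]]] := uh _ _ _ (sub_iso_imfset psiI psiR).
exists (taui p).
  apply/negP => yK; have yDK : taui p \in D `|` K by rewrite in_fsetU yK orbT.
  by move: (psip _ yDK); rewrite -tauE // tauiK eqxx.
apply: preserves_on_eq (preserves_on_comp (automorphism_inv tauiK tauR) psiaR).
move=> x xaD; rewrite /extend /=; case: eqP => // xa.
have xDK : x \in D `|` K by move: xaD => /fset1UP [//|xD]; rewrite in_fsetU xD.
by rewrite -tauE // tauK.
Qed.

Lemma extend_partial_emb {D : {fset S}} (K : {fset S}) {a phi} :
  D != fset0 -> a \notin D ->
  {in D &, injective phi} -> preserves_on D phi ->
  exists2 y, y \notin K & preserves_on (a |` D) (extend phi a y).
Proof.
move=> D0 aD phiI phiR.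
have [g [[gi gK giK] [gR gE]]] := uh _ _ _ (sub_iso_imfset phiI phiR).
have [y0 y0K y0R] := fresh_point [fset gi x | x in K] D0 aD.
exists (g y0).
  by apply: contra y0K => gyK; apply/imfsetP; exists (g y0); rewrite ?gK.
apply: preserves_on_eq (preserves_on_comp gR y0R) => x xaD.
rewrite /extend /=; case: eqP => // xa.
by rewrite gE //; move: xaD => /fset1UP [].
Qed.

Section OrderCorrection.
Variables (e : nat -> S) (idx : S -> nat) (w : S -> S).
Hypotheses (eK : cancel e idx) (idxK : cancel idx e) (wI : injective w).

Definition seg n : {fset S} := [fset e i | i in iota 0 n].

Lemma mem_seg n x : (x \in seg n) = (idx x < n).
Proof.
apply/imfsetP/idP => [[i + ->]|xn]; first by rewrite mem_iota eK.
by exists (idx x); rewrite ?idxK // mem_iota.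
Qed.

Definition wmono_emb_on n g := preserves_on (seg n) g /\
  {in seg n &, forall x y, idx x < idx y -> idx (w (g x)) < idx (w (g y))}.

Lemma wmono_emb_on_eq {n g g'} :
  {in seg n, g =1 g'} -> wmono_emb_on n g -> wmono_emb_on n g'.
Proof.
move=> gg' [gR gI]; split; first exact: preserves_on_eq gg' gR.
by move=> x y xn yn; rewrite -!gg' //; exact: gI.
Qed.

Lemma wmono_emb_on1 : wmono_emb_on 1 id.
Proof. by split=> // x y; rewrite !mem_seg !ltnS !leqn0 => /eqP-> /eqP->. Qed.

Lemma wmono_emb_on_step {n g} :
  wmono_emb_on n.+1 g -> exists y, wmono_emb_on n.+2 (extend g (e n.+1) y).
Proof.
move=> [gR gI].
have aD : e n.+1 \notin seg n.+1 by rewrite mem_seg eK ltnn.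
have D0 : seg n.+1 != fset0 by apply/fset0Pn; exists (e 0); rewrite mem_seg eK.
have gInj : {in seg n.+1 &, injective g}.
  move=> x z xD zD gxz; apply: (can_inj idxK).
  case: (ltngtP (idx x) (idx z)) => // [xz|zx].
  - by have := gI _ _ xD zD xz; rewrite gxz ltnn.
  - by have := gI _ _ zD xD zx; rewrite gxz ltnn.
pose N := \max_(i < n.+1) idx (w (g (e i))).
have [K KP] := finite_preimage (seg N.+1) wI.
have [y yK yR] := extend_partial_emb K D0 aD gInj gR.
have Ny : N < idx (w y).
  by rewrite ltnNge -ltnS -mem_seg; apply: contra yK; exact: KP.
have extE x : idx x < n.+1 -> extend g (e n.+1) y x = g x.
  by move=> xn; apply: extend_notin aD _; rewrite mem_seg.
exists y; split.
  apply: preserves_on_sub yR => x; rewrite mem_seg ltnS leq_eqVlt.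
  case/orP => [/eqP <-|xn]; apply/fset1UP; [left | right]; by rewrite ?idxK ?mem_seg.
move=> x z; rewrite !mem_seg !ltnS => xn; rewrite leq_eqVlt => /orP [/eqP zn|zn] xz.
  have xn' : idx x < n.+1 by rewrite -zn.
  rewrite extE // -(idxK z) zn /extend eqxx; apply: leq_ltn_trans Ny.
  by rewrite -{1}(idxK x); exact: (leq_bigmax (Ordinal xn')).
have xn' := ltn_trans xz zn.
by rewrite !extE //; apply: gI; rewrite ?mem_seg.
Qed.

Definition next_approx n g := epsilon (inhabits g)
  (fun g' => wmono_emb_on n.+2 g' /\ {in seg n.+1, g' =1 g}).

Lemma next_approx_spec {n g} : wmono_emb_on n.+1 g ->
  wmono_emb_on n.+2 (next_approx n g) /\ {in seg n.+1, next_approx n g =1 g}.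
Proof.
move=> gM; have [y yM] := wmono_emb_on_step gM.
apply: (epsilon_spec _ (fun g' => wmono_emb_on n.+2 g' /\ {in seg n.+1, g' =1 g})).
exists (extend g (e n.+1) y); split=> // x; apply: extend_notin.
by rewrite mem_seg eK ltnn.
Qed.

Fixpoint approx n := if n is m.+1 then next_approx m (approx m) else id.

Lemma approx_wmono n : wmono_emb_on n.+1 (approx n).
Proof.
by elim: n => [|n IH]; [exact: wmono_emb_on1 | exact: (next_approx_spec IH).1].
Qed.

Lemma approx_stable {m n x} : m <= n -> idx x <= m -> approx n x = approx m x.
Proof.
move=> /subnK <- xm; elim: (n - m) => [//|k IH].
rewrite addSn /= (next_approx_spec (approx_wmono _)).2 // mem_seg ltnS.
exact: leq_trans xm (leq_addl _ _).
Qed.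

Definition approx_limit x := approx (idx x) x.

Lemma approx_limit_wmono n : wmono_emb_on n.+1 approx_limit.
Proof.
apply: wmono_emb_on_eq (approx_wmono n) => x; rewrite mem_seg ltnS => xn.
exact: approx_stable xn (leqnn _).
Qed.

Lemma approx_limit_self_emb s t : R s t <-> R s (approx_limit \o t).
Proof.
apply: (approx_limit_wmono (\max_(j < ar s) idx (t j))).1 => j.
by rewrite mem_seg ltnS (@leq_bigmax _ (fun j => idx (t j)) j).
Qed.

Lemma approx_limit_wmono_iff x y :
  idx x < idx y <-> idx (w (approx_limit x)) < idx (w (approx_limit y)).
Proof.
have mono x' y' :
    idx x' < idx y' -> idx (w (approx_limit x')) < idx (w (approx_limit y')).
  by move=> xy; apply: (approx_limit_wmono (idx y')).2; rewrite // !mem_seg // ltnW.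
split; first exact: mono.
case: (ltngtP (idx x) (idx y)) => // [yx|xy] h.
- by have := mono _ _ yx; rewrite ltnNge ltnW.
- by move: h; rewrite (can_inj idxK xy) ltnn.
Qed.

End OrderCorrection.

Lemma ordered_self_emb_precomp {lt : S -> S -> Prop} {w} :
  order_type_omega lt -> is_self_emb R w ->
  exists g, is_self_emb R (w \o g) /\ forall x y, lt x y <-> lt (w (g x)) (w (g y)).
Proof.
move=> [e [[idx eK idxK] elt]] [wI wR].
have ltE x y : lt x y <-> idx x < idx y.
  by rewrite -{1}(idxK x) -{1}(idxK y); exact: elt.
have gmono := approx_limit_wmono_iff e idx w eK idxK wI.
exists (approx_limit e idx w); split; [split|].
- move=> x y /= wgxy; apply: (can_inj idxK).
  case: (ltngtP (idx x) (idx y)) => // c; move: (proj1 (gmono _ _) c);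
    by rewrite wgxy ltnn.
- by move=> s t; apply: iff_trans (approx_limit_self_emb e idx w eK idxK wI s t) (wR s _).
- move=> x y; apply: iff_trans (ltE x y) _; apply: iff_trans (gmono x y) _.
  exact: iff_sym (ltE _ _).
Qed.

Lemma range_emb_substr {w} {A E : {fset S}} {f} : is_self_emb R w ->
  (forall y, y \in E -> exists x, w x = y) -> sub_iso R A E f ->
  exists e' : substr A -> S, is_emb_into R e' /\ [fset w (e' x) | x : A] = E.
Proof.
move=> [wI wR] Ew [[fI [fE fR]] fsurj].
have pre (x : A) : exists z, w z = f (val x) by apply: Ew; exact: fE (fsvalP x).
have [e' e'P] := fin_all_exists pre.
exists e'; split; first split.
- move=> x y /(congr1 w); rewrite !e'P => /(fI _ _ (fsvalP x) (fsvalP y)).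
  exact: val_inj.
- move=> s t; apply: iff_trans (fR s (fun i => val (t i)) (fun i => fsvalP (t i))) _.
  have -> : f \o (fun i => val (t i)) = w \o (e' \o t).
    by apply: functional_extensionality => i /=; rewrite e'P.
  exact: iff_sym (wR s _).
- apply/fsetP => y; apply/imfsetP/idP => [[x _ ->]|yE].
    by rewrite e'P; exact: fE (fsvalP x).
  by have [x xA <-] := fsurj y yE; exists [` xA]; rewrite ?e'P.
Qed.

End InducedSubstructures.

Arguments substr {L S} R B.

Theorem corollary6p8 (L : lang) (S : choiceType) (R : interp L S)
    (lt : S -> S -> Prop) :
  order_type_omega lt ->
  fraisse_limit R ->
  finite_big_ramsey_degrees R ->
  strong_amalgamation R ->
  natural_one_point_ext R ->
  forall A : {fset S}, A != fset0 ->
  exists n : nat, forall (k : nat) (gamma : {fset S} -> {fset S} -> 'I_k),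
    exists (X : S -> Prop) (c : {fset S} -> {fset S}),
      [/\ iso_to_sub R lt X,
          (forall E, in_binom R lt X A E -> c E != fset0 /\ E `<=` c E) &
          exists cols : seq 'I_k, (size cols <= n)%N /\
            forall E, in_binom R lt X A E -> gamma (c E) E \in cols].
Proof.
move=> ord [_ uh] bigR sap _ A A0.
have [n hn] := bigR (substr R A) (in_age_substr A0).
exists n => k gamma.
pose chi (f : substr R A -> S) := let E := [fset f x | x : A] in gamma E E.
have [w [wemb [cols [cols_n colsP]]]] := hn k chi.
have [g [[hI hR] hlt]] := ordered_self_emb_precomp sap uh ord wemb.
exists (fun y => exists x, w (g x) = y), id; split.
- by exists (w \o g); split=> // x; exists x.
- move=> E [_ [f [[[_ [fE _]] _] _]]]; split; last exact: fsubset_refl.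
  by case/fset0Pn: A0 => x xA; apply/fset0Pn; exists (f x); exact: fE.
- exists cols; split=> // E [EX [f [fiso _]]].
  have Ew y : y \in E -> exists x, w x = y by move=> /EX [x <-]; exists (g x).
  have [e' [e'emb <-]] := range_emb_substr wemb Ew fiso.
  exact: colsP e' e'emb.
Qed.
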